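(* Let $c<d$ be real numbers and suppose $\omega$ is nonnegative and nondecreasing on $(c,d]$. Let $K\ge1$ be an integer and $c_1,\dots,c_K\in\mathbb{R}$. For $\rho>0$ let $$E_\rho=\Big\{t\in(c,d]:\ \omega(t)^{K-1}\,\omega(d)\prod_{\ell=1}^K|t-c_\ell|\le\rho^K\Big\}.$$ Then $$\int_{E_\rho}\omega(t)\,dt\le C(K)\,\rho,$$ where $C(K)$ depends only on $K$. *)

From mathcomp Require Import all_boot all_order all_algebra.
From mathcomp Require Import all_classical all_reals all_analysis.
Set Implicit Arguments. Unset Strict Implicit. Unset Printing Implicit Defensive.
Import Order.TTheory GRing.Theory Num.Theory.
Local Open Scope classical_set_scope.
Local Open Scope ring_scope.

Definition Eset (R : realType) (c d : R) (w : R -> R) (K : nat)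
    (cs : 'I_K -> R) (rho : R) : set R :=
  [set t | c < t /\ t <= d /\
     w t ^+ (K.-1) * w d * \prod_(l < K) `|t - cs l| <= rho ^+ K].

From mathcomp Require Import all_boot all_order all_algebra.
From mathcomp Require Import all_classical all_reals all_analysis.
From mathcomp Require Import ring measurable_realfun.
Set Implicit Arguments. Unset Strict Implicit. Unset Printing Implicit Defensive.
Import Order.TTheory GRing.Theory Num.Theory.
Import numFieldNormedType.Exports.
Local Open Scope classical_set_scope.
Local Open Scope ring_scope.

(* Only the bound 0 <= w t <= M := w d is used.  Sort the points of E_rho by
   the dyadic level of w: if M / 2^((j+1)K) < w t <= M / 2^(jK), the defining
   inequality of E_rho forces t to lie within a radius r_j of some c_l, where
   r_j is chosen so that M (M / 2^((j+1)K))^(K-1) r_j^K = (2 rho)^K.  Hence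
   w <= sum_j (M / 2^(jK)) sum_l 1_{B(c_l, r_j)} pointwise, and the j-th term
   has integral K 2^(K+2) rho / 2^(j+1); summing the geometric series gives
   C(K) = K 2^(K+2). *)

Lemma exists_geometric_level (R : realType) (q M x : R) :
  2 <= q -> 0 < x -> x <= M -> exists j : nat, M / q ^+ j.+1 < x <= M / q ^+ j.
Proof.
move=> q_ge2 x_gt0 xM; have q_gt0 : 0 < q by apply: lt_le_trans q_ge2.
have below (n : nat) : (M / q ^+ n < x) = (M / x < q ^+ n).
  by rewrite ltr_pdivrMr ?exprn_gt0 // mulrC -ltr_pdivrMr.
have exP : exists n, M / q ^+ n < x.
  exists (Num.Def.archi_bound (M / x)); rewrite below.
  apply: (lt_le_trans (upper_nthrootP (leqnn _))).
  by rewrite lerXn2r ?nnegrE ?(ltW q_gt0).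
case: (ex_minnP exP) => -[|j] ltj minj; first by rewrite expr0 divr1 ltNge xM in ltj.
by exists j; rewrite ltj leNgt; apply/negP => /minj; rewrite ltnn.
Qed.

Lemma exists_factor_lt (R : realFieldType) (k : nat) (z : 'I_k.+1 -> R)
    (a x M b delta : R) :
  0 <= a <= x -> 0 <= M -> 0 <= delta ->
  x ^+ k * M * \prod_(l < k.+1) `|z l| <= b <
    a ^+ k * M * delta ^+ k.+1 ->
  exists l, `|z l| < delta.
Proof.
move=> /andP[a_ge0 ax] M_ge0 delta_ge0 /andP[small big].
apply: contrapT => /forallNP far; move: big; apply/negP; rewrite -leNgt.
apply: le_trans small; apply: ler_pM.
- by rewrite mulr_ge0 ?exprn_ge0.
- by rewrite exprn_ge0.
- by rewrite ler_wpM2r // lerXn2r ?nnegrE // (le_trans a_ge0).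
have -> : delta ^+ k.+1 = \prod_(l < k.+1) delta by rewrite prodr_const card_ord.
apply: ler_prod => l _.
by rewrite delta_ge0 leNgt; apply/negP; exact: far.
Qed.

Lemma level_product_identity (F : fieldType) (k : nat) (M v c : F) :
  M != 0 -> v != 0 ->
  (M / v ^+ k.+1) ^+ k * M * (c / M * v ^+ k) ^+ k.+1 = c ^+ k.+1.
Proof.
move=> M_neq0 v_neq0.
rewrite expr_div_n !exprMn exprVn -!exprM mulnC !exprSr.
have Mk_neq0 : M ^+ k != 0 by rewrite expf_neq0.
have vk_neq0 : v ^+ (k * k.+1) != 0 by rewrite expf_neq0.
by field; rewrite Mk_neq0 vk_neq0 M_neq0.
Qed.

(* [D] need not be measurable. *)
Lemma ge0_le_integral_setT d (T : measurableType d) (R : realType)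
    (mu : {measure set T -> \bar R}) (D : set T) (f g : T -> \bar R) :
  (forall x, D x -> (0 <= f x)%E) -> (forall x, (0 <= g x)%E) ->
  (forall x, D x -> (f x <= g x)%E) ->
  (\int[mu]_(x in D) f x <= \int[mu]_x g x)%E.
Proof.
move=> f_ge0 g_ge0 fg; rewrite !ge0_integralE // patch_setT.
apply: ereal_sup_le => _ [h hf <-]; exists h => // x.
apply: (le_trans (hf x)); rewrite /patch; case: ifPn => [|_]; last exact: g_ge0.
by rewrite inE => /fg.
Qed.

Section level_cover.
Variables (R : realType) (k : nat) (cs : 'I_k.+1 -> R) (M rho : R).
Hypotheses (M_gt0 : 0 < M) (rho_gt0 : 0 < rho).

Definition level_height (j : nat) : R := M / (2 ^+ j) ^+ k.+1.

Definition level_radius (j : nat) : R := 2 * rho / M * (2 ^+ j.+1) ^+ k.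

Definition level_cover (j : nat) (t : R) : \bar R :=
  (\sum_(l < k.+1) (level_height j * \1_(ball (cs l) (level_radius j)) t)%:E)%E.

Lemma level_height_ge0 j : 0 <= level_height j.
Proof. by rewrite divr_ge0 ?exprn_ge0 ?ltW. Qed.

Lemma level_radius_ge0 j : 0 <= level_radius j.
Proof. by rewrite !mulr_ge0 ?exprn_ge0 ?invr_ge0 ?ltW. Qed.

Lemma level_cover_ge0 j t : (0 <= level_cover j t)%E.
Proof.
by apply: sume_ge0 => l _; rewrite lee_fin mulr_ge0 ?level_height_ge0.
Qed.

Lemma level_radius_separates j :
  rho ^+ k.+1 < level_height j.+1 ^+ k * M * level_radius j ^+ k.+1.
Proof.
rewrite /level_height /level_radius level_product_identity ?gt_eqF ?exprn_gt0 //.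
by rewrite ltrXn2r ?ltW // ltr_pMl // ltr1n.
Qed.

Lemma exists_level x : 0 < x -> x <= M ->
  exists j : nat, level_height j.+1 < x <= level_height j.
Proof.
move=> x_gt0 xM.
have [|j] := @exists_geometric_level R (2 ^+ k.+1) M x _ x_gt0 xM.
  by rewrite -[leLHS]expr1 ler_eXn2l ?ltr1n.
by exists j; rewrite /level_height -!exprM !(mulnC _ k.+1) !exprM.
Qed.

Lemma measurable_level_term j l :
  measurable_fun setT
    (fun t => (level_height j * \1_(ball (cs l) (level_radius j)) t)%:E).
Proof.
apply/measurable_EFinP; apply: measurable_funM => //.
by apply: measurable_indic; exact: measurable_ball.
Qed.

Lemma level_cover_ge_height j l t :
  ball (cs l) (level_radius j) t -> ((level_height j)%:E <= level_cover j t)%E.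
Proof.
move=> t_near; rewrite /level_cover (bigD1 l) //= indicE (mem_set t_near).
rewrite mulr1 -[X in (X <= _)%E]adde0 leeD //.
by apply: sume_ge0 => i _; rewrite lee_fin mulr_ge0 ?level_height_ge0.
Qed.

Lemma le_series_level_cover (x t : R) :
  x <= M -> x ^+ k * M * \prod_(l < k.+1) `|t - cs l| <= rho ^+ k.+1 ->
  (x%:E <= \sum_(j <oo) level_cover j t)%E.
Proof.
move=> xM small.
have [x_le0|x_gt0] := leP x 0.
  apply: (@le_trans _ _ 0%E); first by rewrite lee_fin.
  by apply: nneseries_ge0 => j _ _; exact: level_cover_ge0.
have [j /andP[xj1 xj]] := exists_level x_gt0 xM.
have [l near_l] : exists l, `|t - cs l| < level_radius j.
  apply: (@exists_factor_lt R k _ (level_height j.+1) x M (rho ^+ k.+1)).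
  - by rewrite level_height_ge0 ltW.
  - exact: ltW.
  - exact: level_radius_ge0.
  - by rewrite small level_radius_separates.
apply: le_trans (nneseries_lim_ge j.+1 (fun n _ _ => level_cover_ge0 n t)).
rewrite big_nat_recr //= -[x%:E]add0e; apply: leeD.
  by apply: sume_ge0 => n _; exact: level_cover_ge0.
have t_near : ball (cs l) (level_radius j) t.
  by rewrite -ball_normE /ball_ /= distrC.
by apply: le_trans (level_cover_ge_height t_near); rewrite lee_fin.
Qed.

Lemma integral_level_cover j :
  (\int[lebesgue_measure]_t level_cover j t =
    (k.+1%:R * 2 ^+ k.+3 * rho / (2 ^ j.+1)%:R)%:E)%E.
Proof.
have integral_term l : (\int[lebesgue_measure]_t
    (level_height j * \1_(ball (cs l) (level_radius j)) t)%:E =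
    (level_height j * (level_radius j *+ 2))%:E)%E.
  have mball : measurable (ball (cs l) (level_radius j)) by exact: measurable_ball.
  under eq_integral do rewrite EFinM.
  rewrite (ge0_integralZl_EFin _ measurableT) ?level_height_ge0 //; last first.
    by apply/measurable_EFinP; apply: measurable_indic; exact: mball.
  rewrite (integral_indic _ measurableT) ?setIT ?[RHS]EFinM; last exact: mball.
  by congr (_ * _)%E; exact: lebesgue_measure_ball (level_radius_ge0 j).
rewrite ge0_integral_sum //; last 2 first.
- exact: measurable_level_term.
- by move=> l x _; rewrite lee_fin mulr_ge0 ?level_height_ge0.
under eq_bigr do rewrite integral_term.
rewrite sumEFin sumr_const card_ord; congr EFin.
rewrite /level_height /level_radius natrX !exprS exprMn.
have twoj_neq0 : (2 : R) ^+ j != 0 by rewrite expf_neq0.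
have twojk_neq0 : (2 : R) ^+ j ^+ k != 0 by rewrite !expf_neq0.
by field; rewrite twoj_neq0 twojk_neq0 gt_eqF.
Qed.

Lemma integral_series_level_cover :
  (\int[lebesgue_measure]_t (\sum_(j <oo) level_cover j t) <=
    (k.+1%:R * 2 ^+ k.+3 * rho)%:E)%E.
Proof.
rewrite integral_nneseries //; last 2 first.
- by move=> j; apply: emeasurable_sum => l; exact: measurable_level_term.
- by move=> j t _; exact: level_cover_ge0.
rewrite (eq_eseriesr (fun j _ => integral_level_cover j)).
by apply: epsilon_trick0; rewrite mulr_ge0 ?(ltW rho_gt0) // mulr_ge0 ?exprn_ge0.
Qed.

End level_cover.

Theorem lemma2p2 (R : realType) (K : nat) (hK : (0 < K)%N) :
  exists C : R, forall (c d : R) (w : R -> R) (cs : 'I_K -> R) (rho : R),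
    c < d ->
    (forall t, c < t -> t <= d -> 0 <= w t) ->
    (forall s t, c < s -> s <= t -> t <= d -> w s <= w t) ->
    0 < rho ->
    (\int[lebesgue_measure]_(t in Eset c d w cs rho) (w t)%:E <= (C * rho)%:E)%E.
Proof.
case: K hK => [//|k] _; exists (k.+1%:R * 2 ^+ k.+3).
move=> c d w cs rho cd w_ge0 w_mono rho_gt0.
have w_le t : c < t -> t <= d -> w t <= w d by move=> ct td; exact: w_mono.
have Crho_ge0 : 0 <= k.+1%:R * 2 ^+ k.+3 * rho :> R.
  by rewrite mulr_ge0 ?(ltW rho_gt0) // mulr_ge0 ?exprn_ge0.
have [wd_eq0|wd_neq0] := eqVneq (w d) 0.
  rewrite integral0_eq ?lee_fin // => t [ct [td _]].
  by congr EFin; apply/le_anti; rewrite w_ge0 // -wd_eq0 w_le.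
have wd_gt0 : 0 < w d by rewrite lt_def wd_neq0 w_ge0.
apply: le_trans _ (integral_series_level_cover cs wd_gt0 rho_gt0).
apply: ge0_le_integral_setT => [t [ct [td _]]|t|t [ct [td small]]].
- by rewrite lee_fin w_ge0.
- by apply: nneseries_ge0 => j _ _; exact: level_cover_ge0.
- exact: le_series_level_cover (w_le t ct td) small.
Qed.
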